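(* Let $M$ be a colored dependency multigraph with $n$ nodes and $m$ edges (counted over all alternatives of all nodes) and with final node $F$. Then the multigraph collapse algorithm, run on $(M,F)$, terminates and runs in time $\mathcal{O}(d\cdot(n+m))$, where $d$ is the number of collapsed graphs (DAGs) it outputs.
   Context: A \emph{colored dependency multigraph} consists of a finite set $V$ of $n$ nodes (blocks), a distinguished final node $F\in V$, and for each node $v\in V$ a finite (possibly empty) list of \emph{alternatives} (colors). Each alternative of $v$ is a set of nodes on which $v$ depends, and an edge $(u,v)$ of a given color is present exactly when $u$ belongs to that alternative of $v$. The same pair of nodes may be joined by edges of several colors. A node with no alternatives has no dependencies. The graph obtained by following all edges of all colors is assumed acyclic. The total number of edges over all alternatives of all nodes is $m$. A node is \emph{branching} if it has at least two alternatives. Work in the standard RAM model. \textbf{DFS-Until.} Given a graph $G$ of this kind and the node $F$, DFS-Until performs a depth-first search backward from $F$. It follows each visited node's edges to its dependencies, visits each node at most once, and records the visited nodes together with their incoming dependency edges as a graph $D$. It halts and returns $(v,D)$ as soon as it visits a branching node $v$. If the search completes without visiting any branching node, it returns $(\mathrm{NULL},D)$. One call runs in time $\mathcal{O}(n+m)$. \textbf{Collapse algorithm.} Initialize an empty output list and a queue containing $M$. While the queue is nonempty: \begin{itemize} \item dequeue a graph $G$ and compute $(v,D)=\text{DFS-Until}(G,F)$; \item if $v=\mathrm{NULL}$, append $D$ to the output; \item otherwise, for each alternative $c$ of $v$ in $G$, enqueue a copy of $G$ in which $v$ keeps only alternative $c$ and the edges of all other alternatives of $v$ are deleted. \end{itemize}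 The output is a list of $d$ directed acyclic graphs. *)

From mathcomp Require Import all_boot.
Set Implicit Arguments. Unset Strict Implicit. Unset Printing Implicit Defensive.

(* A colored dependency multigraph on the node set 'I_n : each node v has a
   (possibly empty) list of alternatives (colors); each alternative is the
   set of nodes v depends on under that color. *)
Definition graph (n : nat) := 'I_n -> seq {set 'I_n}.

Definition branching n (G : graph n) (v : 'I_n) : bool := 1 < size (G v).

Definition dep_edge n (G : graph n) : rel 'I_n :=
  fun u v => has (fun A : {set 'I_n} => u \in A) (G v).

Definition acyclic n (G : graph n) : Prop :=
  forall u v, dep_edge G u v -> ~~ connect (dep_edge G) v u.

Definition num_edges n (G : graph n) : nat := \sum_(v < n) \sum_(A <- G v) #|A|.

(* Cost model (RAM): the DFS is an explicit-stack preorder DFS following each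
   visited node's dependency edges backward from F.
   Result: None if the fuel ran out (treated as non-termination); otherwise
   Some (found branching node or None, visited nodes, cost). *)
Fixpoint dfs_until n (G : graph n) (fuel : nat) (stack visited : seq 'I_n)
  (cost : nat) : option (option 'I_n * seq 'I_n * nat) :=
  match fuel with
  | 0 => None
  | fuel'.+1 =>
    match stack with
    | [::] => Some (None, visited, cost)
    | v :: st =>
      if v \in visited then dfs_until G fuel' st visited cost.+1
      else if branching G v then Some (Some v, v :: visited, cost.+1)
      else
        let deps := flatten [seq enum (pred_of_set A) | A : {set 'I_n} <- G v] in
        dfs_until G fuel' (deps ++ st) (v :: visited) (cost + 1 + size deps)
    end
  end.

Definition restrict n (G : graph n) (vis : seq 'I_n) : graph n :=
  fun u => if u \in vis then G u else [::].

Definition keep_alt n (G : graph n) (v : 'I_n) (c : {set 'I_n}) : graph n :=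
  fun u => if u == v then [:: c] else G u.

(* Each iteration costs 1 (dequeue) + the DFS cost; outputting D
   costs n + m (building D); each enqueued copy costs n + m (copying G).
   Returns None if the outer fuel (number of iterations) runs out. *)
Fixpoint collapse n (F : 'I_n) (fuel : nat) (queue : seq (graph n))
  (out : seq ({set 'I_n} * graph n)) (time : nat)
  : option (seq ({set 'I_n} * graph n) * nat) :=
  match fuel with
  | 0 => None
  | fuel'.+1 =>
    match queue with
    | [::] => Some (out, time)
    | G :: q =>
      match dfs_until G (n + num_edges G).+1 [:: F] [::] 0 with
      | None => None
      | Some (None, vis, c) =>
          collapse F fuel' q (rcons out ([set x in vis], restrict G vis))
                   (time + 1 + c + (n + num_edges G))
      | Some (Some v, _, c) =>
          collapse F fuel' (q ++ [seq keep_alt G v A | A <- G v]) out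
                   (time + 1 + c + size (G v) * (n + num_edges G))
      end
    end
  end.

From mathcomp Require Import all_boot zify.
Set Implicit Arguments. Unset Strict Implicit. Unset Printing Implicit Defensive.

(* The DFS pops each stack entry once and pushes each edge of a visited node
   once, so one call costs at most 1 + 2m.  In the collapse loop, a branching
   node with k >= 2 alternatives replaces one graph by k copies, each with
   k - 1 fewer alternatives in total, so the weight sum of 3^(#alternatives)
   over the queue strictly decreases (k 3^(s-k+1) < 3^s) and the loop
   terminates.  For the running time, every queued graph carries a credit
   3A and every output graph pays 4A, with A = 6(n + m): emitting an output
   costs at most A, and a branching step into k copies costs at most
   (k + 2)(n + m) <= 3A(k - 1), the credit of the new queue entries.  At the
   end the queue is empty, so time + 3A <= 4A d, i.e. time <= 24 d (n + m). *)

Definition node_edges n (G : graph n) (v : 'I_n) := \sum_(A <- G v) #|A|.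

Definition unvisited_edges n (G : graph n) (vis : seq 'I_n) :=
  \sum_(v < n | v \notin vis) node_edges G v.

Lemma size_flatten_alts n (G : graph n) v :
  size (flatten [seq enum (pred_of_set A) | A : {set 'I_n} <- G v]) =
  node_edges G v.
Proof.
rewrite /node_edges; elim: (G v) => [|A s IH] /=; first by rewrite big_nil.
by rewrite size_cat IH big_cons cardE.
Qed.

Lemma unvisited_edges_nil n (G : graph n) : unvisited_edges G [::] = num_edges G.
Proof. exact: eq_bigl. Qed.

Lemma unvisited_edges_cons n (G : graph n) (v : 'I_n) (vis : seq 'I_n) :
  v \notin vis ->
  unvisited_edges G vis = node_edges G v + unvisited_edges G (v :: vis).
Proof.
move=> vNvis; rewrite /unvisited_edges (bigD1 v) //=; congr (_ + _).
by apply: eq_bigl => u; rewrite in_cons negb_or andbC.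
Qed.

Lemma dfs_until_spec n (G : graph n) fuel st vis cost :
  size st + unvisited_edges G vis < fuel ->
  exists r vis' cost', dfs_until G fuel st vis cost = Some (r, vis', cost') /\
    cost' <= cost + size st + 2 * unvisited_edges G vis /\
    (forall v, r = Some v -> branching G v).
Proof.
elim: fuel st vis cost => [|fuel IH] st vis cost //.
case: st => [|v st] /= fuel_gt.
  by exists None, vis, cost; split => //; split => //; lia.
case: ifP => [vvis|vNvis].
  have [r [vis' [c' [-> [c'_le r_br]]]]] := IH st vis cost.+1 ltac:(lia).
  by exists r, vis', c'; split => //; split => //; lia.
case: ifP => [v_br|_].
  by exists (Some v), (v :: vis), cost.+1; split => //; split => [|u [<-]] //; lia.
have split_edges := unvisited_edges_cons G (negbT vNvis).
(* the ascription makes [size deps] the same lia atom as in [IH] *)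
set deps : seq 'I_n := flatten _.
have size_deps : size deps = node_edges G v := size_flatten_alts G v.
clearbody deps.
have size_pushed : size (deps ++ st) = node_edges G v + size st.
  by rewrite size_cat size_deps.
have [r [vis' [c' [-> [c'_le r_br]]]]] :=
  IH (deps ++ st) (v :: vis) (cost + 1 + size deps) ltac:(lia).
by exists r, vis', c'; split => //; split => //; lia.
Qed.

Lemma dfs_until_from_final n (G : graph n) (F : 'I_n) :
  exists r vis cost,
    dfs_until G (n + num_edges G).+1 [:: F] [::] 0 = Some (r, vis, cost) /\
    cost <= 1 + 2 * num_edges G /\ (forall v, r = Some v -> branching G v).
Proof.
have n_gt0 : 0 < n by case: F => i /=; lia.
have [r [vis [c [run [c_le r_br]]]]] :=
  @dfs_until_spec n G (n + num_edges G).+1 [:: F] [::] 0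
    ltac:(rewrite unvisited_edges_nil /=; lia).
by exists r, vis, c; move: c_le; rewrite unvisited_edges_nil.
Qed.

Definition num_alts n (G : graph n) := \sum_(u < n) size (G u).

Lemma size_alts_le n (G : graph n) v : size (G v) <= num_alts G.
Proof. by rewrite /num_alts (bigD1 v) //= leq_addr. Qed.

Lemma num_alts_keep_alt n (G : graph n) v A :
  num_alts (keep_alt G v A) + size (G v) = num_alts G + 1.
Proof.
rewrite /num_alts (bigD1 v) // [in RHS](bigD1 v) //= /keep_alt eqxx.
rewrite (eq_bigr (fun i => size (G i))) /=; last by move=> i /negbTE ->.
lia.
Qed.

Lemma num_edges_keep_alt n (G : graph n) v A : A \in G v ->
  num_edges (keep_alt G v A) <= num_edges G.
Proof.
move=> AGv; rewrite /num_edges (bigD1 v) // [in X in _ <= X](bigD1 v) //=.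
rewrite /keep_alt eqxx big_seq1.
rewrite (eq_bigr (fun i => \sum_(B <- G i) #|B|)); last by move=> i /negbTE ->.
by rewrite leq_add2r (big_rem A AGv) leq_addr.
Qed.

Definition queue_weight n (q : seq (graph n)) := \sum_(G <- q) 3 ^ num_alts G.

Lemma ltn_exp3S k : k.+2 < 3 ^ k.+1.
Proof. by elim: k => [|k IH] //; rewrite expnS; lia. Qed.

Lemma queue_weight_keep_alt n (G : graph n) v : branching G v ->
  queue_weight [seq keep_alt G v A | A <- G v] < 3 ^ num_alts G.
Proof.
rewrite /branching /queue_weight big_map => k_gt1.
have alts_le := size_alts_le G v.
set k := size (G v) in k_gt1 alts_le.
rewrite (eq_bigr (fun=> 3 ^ (num_alts G + 1 - k))); last first.
  by move=> B _; have := num_alts_keep_alt G v B; rewrite -/k => <-; rewrite addnK.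
rewrite big_const_seq count_predT iter_addn_0 -/k.
set s := num_alts G + 1 - k.
have -> : num_alts G = s + (k - 1) by rewrite /s; lia.
rewrite expnD ltn_pmul2l ?expn_gt0 //.
clear s alts_le; clearbody k.
by case: k k_gt1 => [|[|j]] // _; rewrite subn1; apply: ltn_exp3S.
Qed.

Definition credit (T U : Type) (A : nat) (out : seq T) (q : seq U) (time : nat) :=
  time + 3 * A <= 4 * A * size out + 3 * A * size q.

Lemma credit_output T U A (out : seq T) x (G : U) q time t : t <= A ->
  credit A out (G :: q) time -> credit A (rcons out x) q (time + t).
Proof. by rewrite /credit size_rcons /=; nia. Qed.

Lemma credit_branch T U A (out : seq T) (G : U) q children time t :
  t + 3 * A <= 3 * A * size children ->
  credit A out (G :: q) time -> credit A out (q ++ children) (time + t).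
Proof. by rewrite /credit size_cat /=; nia. Qed.

Lemma collapse_cons n (F : 'I_n) fuel G q out time :
  collapse F fuel.+1 (G :: q) out time =
  match dfs_until G (n + num_edges G).+1 [:: F] [::] 0 with
  | None => None
  | Some (None, vis, c) =>
      collapse F fuel q (rcons out ([set x in vis], restrict G vis))
               (time + 1 + c + (n + num_edges G))
  | Some (Some v, _, c) =>
      collapse F fuel (q ++ [seq keep_alt G v A | A <- G v]) out
               (time + 1 + c + size (G v) * (n + num_edges G))
  end.
Proof. by []. Qed.

Lemma collapse_credit n (F : 'I_n) m A q out time : 6 * (n + m) <= A ->
  all (fun G => num_edges G <= m) q -> credit A out q time ->
  exists fuel out' time', collapse F fuel q out time = Some (out', time') /\
    time' + 3 * A <= 4 * A * size out'.
Proof.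
move=> A_ge; have n_gt0 : 0 < n by case: F => i /=; lia.
move: {2}(queue_weight q).+1 (ltnSn (queue_weight q)) => N.
elim: N q out time => [|N IH] [|G q] out time wq_lt //=.
  by move=> _ cr; exists 1, out, time; move: cr; rewrite /credit /= muln0 addn0.
case/andP=> G_le q_le cr.
have [[v|] [vis [c [dfs_eq [c_le r_br]]]]] := dfs_until_from_final G F.
- have v_br := r_br v erefl.
  have wq_children := queue_weight_keep_alt v_br.
  set children := [seq keep_alt G v B | B <- G v] in wq_children *.
  have wq_lt' : queue_weight (q ++ children) < N.
    by move: wq_lt wq_children; rewrite /queue_weight big_cat big_cons /=; lia.
  have children_le : all (fun G => num_edges G <= m) (q ++ children).
    rewrite all_cat q_le all_map; apply/allP => B B_in /=.
    exact: leq_trans (num_edges_keep_alt B_in) G_le.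
  have cr' : credit A out (q ++ children)
               (time + 1 + c + size (G v) * (n + num_edges G)).
    rewrite -!addnA; apply: credit_branch cr; rewrite size_map.
    by move: v_br; rewrite /branching; nia.
  have [fuel [out' [time' run]]] := IH _ _ _ wq_lt' children_le cr'.
  by exists fuel.+1, out', time'; rewrite collapse_cons dfs_eq.
- have wq_lt' : queue_weight q < N.
    by move: wq_lt (expn_gt0 3 (num_alts G)); rewrite /queue_weight big_cons; lia.
  have cr' : credit A (rcons out ([set x in vis], restrict G vis)) q
               (time + 1 + c + (n + num_edges G)).
    by rewrite -!addnA; apply: credit_output cr; lia.
  have [fuel [out' [time' run]]] := IH _ _ _ wq_lt' q_le cr'.
  by exists fuel.+1, out', time'; rewrite collapse_cons dfs_eq.
Qed.

Theorem mainTheorem1 :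
  exists c : nat, forall (n : nat) (M : graph n) (F : 'I_n),
    acyclic M ->
    exists (fuel : nat) (out : seq ({set 'I_n} * graph n)) (time : nat),
      collapse F fuel [:: M] [::] 0 = Some (out, time) /\
      time <= c * (size out * (n + num_edges M)).
Proof.
exists 24 => n M F _.
have [fuel [out [time [run cr]]]] :=
  @collapse_credit n F (num_edges M) _ [:: M] [::] 0 (leqnn _)
    ltac:(by rewrite /= leqnn) ltac:(by rewrite /credit /=; lia).
by exists fuel, out, time; split => //; move: cr; rewrite /credit /=; nia.
Qed.
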